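(* For every integer $k\ge 2$, the $2$-full words of $\mathcal W^2_{(3k+2)\times 5}$ are unique up to symmetry: any two of them are obtained from one another by reflection across the horizontal axis, reflection across the vertical axis, or their composition.
   Context: A 2-dimensional binary word of dimensions $h\times w$ is an $h\times w$ matrix with entries in $\{\square,\blacksquare\}$ (filled cells $\blacksquare$, empty cells $\square$). Two cells $(i,j),(i',j')$ are adjacent if $|i-i'|+|j-j'|=1$; the degree of a filled cell is the number of filled cells adjacent to it. $\mathcal W^2_{h\times w}$ is the set of $h\times w$ binary words in which every filled cell has degree at most $2$; $W$ is $2$-full if its number of filled cells is maximal in $\mathcal W^2_{h\times w}$. *)

From mathcomp Require Import all_boot all_order all_algebra.
Set Implicit Arguments. Unset Strict Implicit. Unset Printing Implicit Defensive.
Local Open Scope ring_scope.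

(* A 2-dimensional binary word of dimensions h x w: an h x w matrix over bool,
   true = filled cell, false = empty cell. *)
Definition word (h w : nat) := 'M[bool]_(h, w).

Definition adjacent (h w : nat) (c d : 'I_h * 'I_w) : bool :=
  ((c.1 == d.1 :> nat) && ((c.2.+1 == d.2 :> nat) || (d.2.+1 == c.2 :> nat)))
  || ((c.2 == d.2 :> nat) && ((c.1.+1 == d.1 :> nat) || (d.1.+1 == c.1 :> nat))).

Definition degree (h w : nat) (W : word h w) (c : 'I_h * 'I_w) : nat :=
  #|[set d : 'I_h * 'I_w | adjacent c d && W d.1 d.2]|.

Definition nfilled (h w : nat) (W : word h w) : nat :=
  #|[set c : 'I_h * 'I_w | W c.1 c.2]|.

Definition inW2 (h w : nat) (W : word h w) : bool :=
  [forall c : 'I_h * 'I_w, W c.1 c.2 ==> (degree W c <= 2)%N].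

Definition two_full (h w : nat) (W : word h w) : Prop :=
  inW2 W /\ forall V : word h w, inW2 V -> (nfilled V <= nfilled W)%N.

Definition reflH (h w : nat) (W : word h w) : word h w :=
  \matrix_(i, j) W (rev_ord i) j.

Definition reflV (h w : nat) (W : word h w) : word h w :=
  \matrix_(i, j) W i (rev_ord j).

From mathcomp Require Import all_boot all_order all_algebra.
From mathcomp Require Import zify.
Set Implicit Arguments. Unset Strict Implicit. Unset Printing Implicit Defensive.

(* Read every row of a word of width 5 as a 5-bit number; the degree condition
   on a row only involves that row and its two neighbours.  A potential
   [potential q a b], obtained by forward dynamic programming over the first rows
   and periodic of period 3 from row 6 on, satisfies
     3 |b| + potential q a b <= 10 + potential q' b c
   along every admissible triple of rows a, b, c.  Telescoping bounds the number
   of filled cells of a (3k+2) x 5 word of W^2 by 10k + 8, and an explicit word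
   attains the bound, so in a 2-full word every step is an equality.  The states
   (previous row, row) of such a word lie in small sets computed backwards from
   the bottom row, within which each state determines the next row, and the top
   row is 23 or 29 (columns 0, 1, 2, 4 or 0, 2, 3, 4 filled: mirror images).
   Hence a 2-full word is determined by its top row and is W or its mirror. *)

(** * Vertical reflection *)

Section VerticalReflection.

Variables h w : nat.
Implicit Types (W : word h w) (c d : 'I_h * 'I_w).

Definition flipV c : 'I_h * 'I_w := (c.1, rev_ord c.2).

Lemma flipVK : involutive flipV.
Proof. by case=> i j; rewrite /flipV rev_ordK. Qed.

Lemma adjacent_flipV c d : adjacent (flipV c) (flipV d) = adjacent c d.
Proof. by case: c d => [i [j Hj]] [i' [j' Hj']]; rewrite /adjacent /=; lia. Qed.

Lemma card_flipV (P : pred ('I_h * 'I_w)) :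
  #|[set d | P (flipV d)]| = #|[set d | P d]|.
Proof.
have -> : [set d | P (flipV d)] = flipV @^-1: [set d | P d] by apply/setP=> d; rewrite !inE.
exact/card_preimset/(can_inj flipVK).
Qed.

Lemma reflV_flipV W d : reflV W d.1 d.2 = W (flipV d).1 (flipV d).2.
Proof. by rewrite mxE. Qed.

Lemma degree_reflV W c : degree (reflV W) c = degree W (flipV c).
Proof.
rewrite /degree -(card_flipV [pred d | adjacent (flipV c) d && W d.1 d.2]).
by apply: eq_card => d; rewrite !inE /= adjacent_flipV reflV_flipV.
Qed.

Lemma nfilled_reflV W : nfilled (reflV W) = nfilled W.
Proof.
rewrite /nfilled -(card_flipV [pred d | W d.1 d.2]).
by apply: eq_card => d; rewrite !inE /= reflV_flipV.
Qed.

Lemma inW2_reflV W : inW2 (reflV W) = inW2 W.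
Proof.
apply/forallP/forallP => H c.
  by have := H (flipV c); rewrite reflV_flipV degree_reflV flipVK.
by rewrite reflV_flipV degree_reflV; apply: H.
Qed.

Lemma two_full_reflV W : two_full W -> two_full (reflV W).
Proof. by case=> HW Hmax; split=> [|V HV]; rewrite ?inW2_reflV ?nfilled_reflV //; apply: Hmax. Qed.

End VerticalReflection.

(** * Cells and row codes *)

Lemma sum_ord_eq n m : \sum_(x < n) (x == m :> nat : nat) = (m < n).
Proof.
elim: n => [|n IH]; first by rewrite big_ord0.
rewrite big_ord_recr /= IH ltnS eq_sym.
by case: ltngtP => //= ->; rewrite ltnn.
Qed.

Lemma sum_ord_andb_eq n m (P : bool) :
  \sum_(x < n) (P && (x == m :> nat) : nat) = P && (m < n).
Proof. by case: P => /=; [rewrite sum_ord_eq | rewrite big1]. Qed.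

Lemma sum_ord_mul2 n m (P : 'I_n -> nat) (Q : 'I_m -> nat) K :
  \sum_(x < n) \sum_(y < m) (P x * Q y * K) = (\sum_(x < n) P x) * (\sum_(y < m) Q y) * K.
Proof.
rewrite -mulnA big_distrl /=; apply: eq_bigr => x _.
by rewrite big_distrl big_distrr /=; apply: eq_bigr => y _; rewrite mulnA.
Qed.

Lemma adjacent_indicatorE (g : nat -> nat -> bool) a b x y :
  (((a == x) && ((b.+1 == y) || (y.+1 == b))) || ((b == y) && ((a.+1 == x) || (x.+1 == a)))) && g x y
  = (x == a) * (y == b.+1) * g a b.+1 + (x == a) * ((0 < b) && (y == b.-1)) * g a b.-1
  + (x == a.+1) * (y == b) * g a.+1 b + ((0 < a) && (x == a.-1)) * (y == b) * g a.-1 b :> nat.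
Proof.
case: a => [|a]; case: b => [|b] /=;
repeat (case: eqP => [?|?]; subst => /=); rewrite ?muln0 ?mul0n ?muln1 ?add0n ?addn0 //; lia.
Qed.

Section Cells.

Variables h w : nat.
Implicit Type W : word h w.

(* [cell W i j] is [false] outside the grid, so border cells need no special case. *)
Definition cell W (i j : nat) : bool :=
  match (insub i : option 'I_h), (insub j : option 'I_w) with
  | Some a, Some b => W a b | _, _ => false end.

Lemma cellE W (a : 'I_h) (b : 'I_w) : cell W a b = W a b.
Proof. by rewrite /cell !valK. Qed.

Lemma cell_out W i j : ~~ ((i < h) && (j < w)) -> cell W i j = false.
Proof.
rewrite /cell; case: insubP => [a Ha _|//]; case: insubP => [b Hb _|//].
by rewrite Ha Hb.
Qed.

Lemma cell_in_range W i j : cell W i j -> (i < h) && (j < w).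
Proof. by apply: contraLR => /cell_out ->. Qed.

Lemma degreeE W (c : 'I_h * 'I_w) :
  degree W c = ((0 < c.1) && cell W c.1.-1 c.2) + cell W c.1.+1 c.2
             + ((0 < c.2) && cell W c.1 c.2.-1) + cell W c.1 c.2.+1.
Proof.
rewrite /degree cardsE -sum1_card big_mkcond /=.
transitivity (\sum_(x < h) \sum_(y < w)
   ((((c.1 == x :> nat) && ((c.2.+1 == y :> nat) || (y.+1 == c.2 :> nat)))
    || ((c.2 == y :> nat) && ((c.1.+1 == x :> nat) || (x.+1 == c.1 :> nat)))) && cell W x y : nat)).
  rewrite pair_big /=; apply: eq_bigr => -[x y] _ /=.
  by rewrite unfold_in /= cellE; case: (_ && _).
under eq_bigr => x _ do (under eq_bigr => y _ do rewrite (adjacent_indicatorE (cell W)); rewrite !big_split /=).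
rewrite !big_split /= !sum_ord_mul2 !sum_ord_eq !sum_ord_andb_eq.
case: c => -[a Ha] [b Hb] /=.
have guard i j : (i < h) * (j < w) * cell W i j = cell W i j.
  by case: (boolP (cell W i j)) => [/cell_in_range/andP[-> ->]|]; rewrite ?muln0.
rewrite !guard (leq_ltn_trans (leq_pred a) Ha) (leq_ltn_trans (leq_pred b) Hb) Ha Hb.
case: a b Ha Hb => [|a] [|b] //= *; lia.
Qed.

End Cells.

Definition bit (x j : nat) : bool := odd (iter j half x).

Definition popcount x : nat := bit x 0 + bit x 1 + bit x 2 + bit x 3 + bit x 4.

Definition mirror x : nat := bit x 4 + bit x 3 * 2 + bit x 2 * 4 + bit x 1 * 8 + bit x 0 * 16.

(* The filled cells of row [b] have degree at most 2 between rows [a] and [c]. *)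
Definition row_ok a b c :=
  all (fun j => ~~ bit b j || (bit a j + bit c j
         + (if j is j'.+1 then bit b j' else false) + bit b j.+1 <= 2)) (iota 0 5).

Definition prev (r : nat -> nat) i := if i is i'.+1 then r i' else 0.

Definition codes := iota 0 32.

Lemma mem_codes x : (x \in codes) = (x < 32).
Proof. by rewrite mem_iota. Qed.

Lemma bit_small x j : x < 2 ^ j -> bit x j = false.
Proof.
have iter_half i : iter i half x = x %/ 2 ^ i.
  by elim: i => [|i IH]; rewrite ?divn1 //= IH expnSr divnMA divn2.
by move=> Hx; rewrite /bit iter_half divn_small.
Qed.

Lemma bit0 j : bit 0 j = false.
Proof. by rewrite bit_small ?expn_gt0. Qed.

Lemma bits_code x : x < 32 ->
  bit x 0 + bit x 1 * 2 + bit x 2 * 4 + bit x 3 * 8 + bit x 4 * 16 = x.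
Proof.
move=> Hx; suff /allP/(_ x) : all (fun x => bit x 0 + bit x 1 * 2 + bit x 2 * 4
    + bit x 3 * 8 + bit x 4 * 16 == x) codes by rewrite mem_codes => /(_ Hx)/eqP.
by [].
Qed.

Section RowCodes.

Variable h : nat.
Implicit Types (W V : word h 5).

Definition code W i : nat :=
  cell W i 0 + cell W i 1 * 2 + cell W i 2 * 4 + cell W i 3 * 8 + cell W i 4 * 16.

Lemma code_lt W i : code W i < 32.
Proof.
rewrite /code; case: (cell W i 0); case: (cell W i 1); case: (cell W i 2);
  case: (cell W i 3); by case: (cell W i 4).
Qed.

Lemma bit_code W i j : bit (code W i) j = cell W i j.
Proof.
have [Hj|Hj] := ltnP j 5.
  move: Hj; case: j => [|[|[|[|[|j]]]]] // _; rewrite /code;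
    case: (cell W i 0); case: (cell W i 1); case: (cell W i 2);
    case: (cell W i 3); by case: (cell W i 4).
rewrite cell_out; last by rewrite [j < 5]ltnNge Hj andbF.
by rewrite bit_small // (leq_trans (code_lt W i) (@leq_pexp2l 2 5 j isT Hj)).
Qed.

Lemma code_out W i : h <= i -> code W i = 0.
Proof. by move=> Hi; rewrite /code !cell_out // ltnNge Hi. Qed.

Lemma bit_prev W i j : bit (prev (code W) i) j = (0 < i) && cell W i.-1 j.
Proof. by case: i => [|i] /=; rewrite ?bit0 ?bit_code. Qed.

Lemma code_inj W V : (forall i, code W i = code V i) -> W = V.
Proof.
by move=> E; apply/matrixP => a b; rewrite -[W a b]cellE -[V a b]cellE -!bit_code E.
Qed.

Lemma degree_le2_code W (a : 'I_h) (b : 'I_5) :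
  (W a b ==> (degree W (a, b) <= 2)) =
  (~~ bit (code W a) b || (bit (prev (code W) a) b + bit (code W a.+1) b
      + (if nat_of_ord b is j'.+1 then bit (code W a) j' else false) + bit (code W a) b.+1 <= 2)).
Proof.
rewrite degreeE /= !bit_code bit_prev -cellE implybE.
by case: b => [[|j] Hj] /=; rewrite ?bit_code.
Qed.

Lemma inW2_codes W :
  inW2 W <-> (forall i, i < h -> row_ok (prev (code W) i) (code W i) (code W i.+1)).
Proof.
split=> [/forallP H i Hi | H].
  apply/allP => j; rewrite mem_iota add0n => Hj.
  by have := H (Ordinal Hi, Ordinal Hj); rewrite /= degree_le2_code.
apply/forallP => -[a b]; have /allP/(_ (nat_of_ord b)) := H a (ltn_ord a).
by rewrite mem_iota add0n ltn_ord -degree_le2_code; apply.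
Qed.

Lemma nfilled_codes W : nfilled W = \sum_(i < h) popcount (code W i).
Proof.
transitivity (\sum_(i < h) \sum_(j < 5) (cell W i j : nat)).
  rewrite pair_big /nfilled cardsE -sum1_card big_mkcond /=.
  apply: eq_bigr => -[i j] _; rewrite unfold_in /= cellE.
  by change (mx_val W (i, j)) with (W i j); case: (W i j).
by apply: eq_bigr => i _; rewrite /popcount !bit_code !big_ord_recr big_ord0.
Qed.

Lemma code_reflV W i : code (reflV W) i = mirror (code W i).
Proof.
have [Hi|Hi] := ltnP i h; last by rewrite !code_out.
rewrite /code /mirror !bit_code.
have E j : j < 5 -> cell (reflV W) i j = cell W i (4 - j).
  by move=> Hj; rewrite -[i]/(nat_of_ord (Ordinal Hi)) -[j]/(nat_of_ord (Ordinal Hj)) cellE mxE -cellE /= subSS.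
by rewrite !E.
Qed.

Definition word_of_codes (r : nat -> nat) : word h 5 := (\matrix_(i, j) bit (r i) j)%R.

Lemma code_word_of_codes r i : r i < 32 -> code (word_of_codes r) i = if i < h then r i else 0.
Proof.
move=> Hr; have [Hi|Hi] := ltnP i h; last exact: code_out.
rewrite -(bits_code Hr) /code.
have E j : j < 5 -> cell (word_of_codes r) i j = bit (r i) j.
  by move=> Hj; rewrite -[i]/(nat_of_ord (Ordinal Hi)) -[j]/(nat_of_ord (Ordinal Hj)) cellE mxE.
by rewrite !E.
Qed.

End RowCodes.

(** * The certificate *)

Definition table := seq (seq nat).

Definition entry (T : table) a b := nth 0 (nth [::] T a) b.

Definition start_table : table := [seq [seq (if a == 0 then 20 else 0) | b <- codes] | a <- codes].

Definition dp_step (T : table) : table :=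
  [seq [seq foldr maxn 0 [seq entry T a b + 3 * popcount b - 10
                         | a <- codes & (0 < entry T a b) && row_ok a b c]
       | c <- codes] | b <- codes].

Definition potential_tables := traject dp_step start_table 9.

(* [potential q a b] is 20 plus the maximum of 3 (filled cells) - 10 q over the
   fillings of rows 0, ..., q - 1 ending with row [a] whose rows meet the degree
   condition when row [q] is [b]; 0 marks pairs that cannot occur.  From row 6 on
   the phase cycles through 6, 7, 8.  Only the properties checked in
   [certificate] are used below. *)
Definition potential q a b := entry (nth [::] potential_tables q) a b.

Definition next_phase q := if q == 8 then 6 else q.+1.

Definition phase i := iter i next_phase 0.

Definition tight a b c q :=
  row_ok a b c && (3 * popcount b + potential q a b == 10 + potential (next_phase q) b c).

Definition predecessors (s : nat * nat * nat) : seq (nat * nat * nat) :=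
  [seq t <- [seq (a, s.1.1, q) | a <- codes, q <- iota 0 9]
     | (next_phase t.2 == s.2) && tight t.1.1 s.1.1 s.1.2 t.2].

Definition tight_pred (S : seq (nat * nat * nat)) := undup (flatten (map predecessors S)).

Definition end_states : seq (nat * nat * nat) := [seq (x, 0, 8) | x <- codes & potential 8 x 0 == 24].

(* A state is (previous row, row, phase).  [tight_states (phase m)] contains the
   state of row [h - m] of every optimal word with [h] rows ([optimal_states]). *)
Definition tight_states m := iter m tight_pred end_states.

Definition successors (s : nat * nat * nat) (S : seq (nat * nat * nat)) :=
  [seq c <- codes | tight s.1.1 s.1.2 c s.2 && ((s.1.2, c, next_phase s.2) \in S)].

Definition next_row (s : nat * nat * nat) v := head 0 (successors s (tight_states v)).

Lemma next_phase_lt q : q < 9 -> next_phase q < 9.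
Proof. by rewrite /next_phase; case: eqP; lia. Qed.

Lemma phase_lt i : phase i < 9.
Proof. by elim: i => //= i; apply: next_phase_lt. Qed.

Lemma phase_3k2 k : 2 <= k -> phase (3 * k + 2) = 8.
Proof.
elim: k => [|k IH] // Hk; have [->|Hk'] := eqVneq k 1; first by [].
by rewrite /phase mulnS -addnA iterD -/(phase _) IH //; lia.
Qed.

Lemma all_codesP (P : pred nat) : all P codes -> forall x, x < 32 -> P x.
Proof. by move=> /allP H x; rewrite -mem_codes; apply: H. Qed.

Lemma all_phasesP (P : pred nat) : all P (iota 0 9) -> forall q, q < 9 -> P q.
Proof. by move=> /allP H q Hq; apply: H; rewrite mem_iota. Qed.

Definition potential_ok :=
  all (fun q => all (fun a => all (fun b => all (fun c =>
    (3 * popcount b + potential q a b <= 10 + potential (next_phase q) b c) || ~~ row_ok a b c)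
  codes) codes) codes) (iota 0 9).

Definition boundary_ok :=
  all (fun y => potential 0 0 y == 20) codes && all (fun x => potential 8 x 0 <= 24) codes.

Definition periodic_ok := all (fun s => s \in tight_states 6) (tight_pred (tight_states 8)).

Definition successors_ok :=
  all (fun v => let S := tight_states v in
         all (fun s => size (successors s S) == 1) (tight_states (next_phase v))) (iota 0 9).

Definition initial_ok :=
  ((0, 29, 0) \in tight_states 8)
  && all (fun s : nat * nat * nat => (s.2 != 0) || (s.1.2 \in [:: 23; 29])) (tight_states 8).

(* One evaluation for all checks, so that the potential tables are computed only once. *)
Lemma certificate : [&& potential_ok, boundary_ok, periodic_ok, successors_ok & initial_ok].
Proof. by vm_compute. Qed.

Lemma potential_step a b c q : a < 32 -> b < 32 -> c < 32 -> q < 9 -> row_ok a b c ->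
  3 * popcount b + potential q a b <= 10 + potential (next_phase q) b c.
Proof.
case/and5P: certificate; rewrite /potential_ok => /all_phasesP H _ _ _ _ Ha Hb Hc Hq Hok.
by move: (H q Hq) => /all_codesP/(_ a Ha)/all_codesP/(_ b Hb)/all_codesP/(_ c Hc); rewrite Hok orbF.
Qed.

Lemma potential_start y : y < 32 -> potential 0 0 y = 20.
Proof.
by case/and5P: certificate; rewrite /boundary_ok => _ /andP[/all_codesP H _] _ _ _ /H/eqP.
Qed.

Lemma potential_end x : x < 32 -> potential 8 x 0 <= 24.
Proof. by case/and5P: certificate; rewrite /boundary_ok => _ /andP[_ /all_codesP H] _ _ _ /H. Qed.

Lemma mem_tight_pred S a b c q : a < 32 -> q < 9 -> tight a b c q ->
  (b, c, next_phase q) \in S -> (a, b, q) \in tight_pred S.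
Proof.
move=> Ha Hq Ht HS; rewrite mem_undup; apply/flatten_mapP; exists (b, c, next_phase q) => //.
rewrite mem_filter; apply/andP; split; first by rewrite /= eqxx Ht.
by apply/allpairsP; exists (a, q); split; rewrite ?mem_codes ?mem_iota.
Qed.

Lemma tight_states_step u : u < 9 ->
  {subset tight_pred (tight_states u) <= tight_states (next_phase u)}.
Proof.
case/and5P: certificate; rewrite /periodic_ok => _ _ /allP periodic _ _.
by rewrite /next_phase; case: eqP => [-> _ | _ _ s]; [exact: periodic | apply].
Qed.

Lemma tight_states0 : tight_states 0 = end_states.
Proof. by []. Qed.

Lemma mem_end_states x : x < 32 -> potential 8 x 0 = 24 -> (x, 0, 8) \in end_states.
Proof. by move=> Hx Hp; apply/mapP; exists x; rewrite ?mem_filter ?Hp ?eqxx ?mem_codes. Qed.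

Lemma end_statesP s : s \in end_states -> s.1.2 = 0 /\ potential 8 s.1.1 0 = 24.
Proof.
rewrite /end_states => /mapP[x]; rewrite mem_filter => /andP[/eqP Hx _] ->.
by split; last exact: Hx.
Qed.

Lemma successorsE v s : v < 9 -> s \in tight_states (next_phase v) ->
  successors s (tight_states v) = [:: next_row s v].
Proof.
case/and5P: certificate; rewrite /successors_ok => _ _ _ /all_phasesP H _ Hv.
move=> /(allP (H v Hv)).
by rewrite /next_row; case: (successors _ _) => [|c []].
Qed.

Lemma mem_successors s S c : (c \in successors s S) =
  [&& c < 32, tight s.1.1 s.1.2 c s.2 & (s.1.2, c, next_phase s.2) \in S].
Proof. by rewrite mem_filter mem_codes andbC andbA. Qed.

Lemma initial_state : (0, 29, 0) \in tight_states 8.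
Proof. by case/and5P: certificate; rewrite /initial_ok => _ _ _ _ /andP[H _]; exact: H. Qed.

Lemma initial_state_row s : s \in tight_states 8 -> s.2 = 0 -> s.1.2 = 23 \/ s.1.2 = 29.
Proof.
case/and5P: certificate; rewrite /initial_ok => _ _ _ _ /andP[_ /allP H].
move=> /H + Hq; rewrite Hq /= !inE.
by case/orP=> /eqP; [left | right].
Qed.

Lemma next_row_lt s v : next_row s v < 32.
Proof.
rewrite /next_row; case E: (successors s (tight_states v)) => [|c l] //=.
by have := mem_head c l; rewrite -E mem_successors => /andP[].
Qed.

Lemma next_rowP v s : v < 9 -> s \in tight_states (next_phase v) ->
  tight s.1.1 s.1.2 (next_row s v) s.2 /\ (s.1.2, next_row s v, next_phase s.2) \in tight_states v.
Proof.
move=> Hv Hs; have := mem_head (next_row s v) [::].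
by rewrite -(successorsE Hv Hs) mem_successors => /and3P[_ -> ->].
Qed.

(** * Optimal row codes *)

Definition slack (r : nat -> nat) i :=
  (10 + potential (phase i.+1) (r i) (r i.+1))
  - (3 * popcount (r i) + potential (phase i) (prev r i) (r i)).

Lemma phaseS i : phase i.+1 = next_phase (phase i).
Proof. by []. Qed.

Lemma prev_lt (r : nat -> nat) i : (forall i, r i < 32) -> prev r i < 32.
Proof. by move=> Hr; case: i => // i; apply: Hr. Qed.

Lemma potential_telescope (r : nat -> nat) n : (forall i, r i < 32) ->
  (forall i, i < n -> row_ok (prev r i) (r i) (r i.+1)) ->
  3 * \sum_(i < n) popcount (r i) + potential 0 0 (r 0) + \sum_(i < n) slack r i
  = 10 * n + potential (phase n) (prev r n) (r n).
Proof.
move=> Hr; elim: n => [|n IH] Hok; first by rewrite !big_ord0 muln0 add0n addn0.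
rewrite !big_ord_recr /= [slack r n]/slack -phaseS.
have := potential_step (prev_lt n Hr) (Hr n) (Hr n.+1) (phase_lt n) (Hok n (ltnSn n)).
rewrite -phaseS; move: (IH (fun i Hi => Hok i (ltnW Hi))).
(* [lia] does not treat big sums as atoms, hence the [set]s here and below. *)
set S := \sum_(i < n) popcount (r i); set T := \sum_(i < n) slack r i; lia.
Qed.

Section Optimum.

Variable k : nat.
Hypothesis hk : 2 <= k.
Local Notation h := (3 * k + 2).

Definition admissible (r : nat -> nat) :=
  [/\ forall i, r i < 32, forall i, h <= i -> r i = 0
    & forall i, i < h -> row_ok (prev r i) (r i) (r i.+1)].

Definition optimal r := admissible r /\ \sum_(i < h) popcount (r i) = 10 * k + 8.

Lemma admissible_telescope r : admissible r ->
  3 * \sum_(i < h) popcount (r i) + 20 + \sum_(i < h) slack r i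
  = 30 * k + 20 + potential 8 (prev r h) 0.
Proof.
case=> Hr Hz Hok; have := potential_telescope Hr Hok.
rewrite (potential_start (Hr 0)) (phase_3k2 hk) (Hz h (leqnn h)).
set S := \sum_(i < h) _; set T := \sum_(i < h) _; lia.
Qed.

Lemma admissible_sum_le r : admissible r -> \sum_(i < h) popcount (r i) <= 10 * k + 8.
Proof.
move=> Hr; have := admissible_telescope Hr; case: Hr => Hlt _ _.
have := potential_end (prev_lt h Hlt).
set S := \sum_(i < h) _; set T := \sum_(i < h) _; lia.
Qed.

Lemma slack_eq0 r i : row_ok (prev r i) (r i) (r i.+1) ->
  3 * popcount (r i) + potential (phase i) (prev r i) (r i)
    <= 10 + potential (phase i.+1) (r i) (r i.+1) ->
  (slack r i == 0) = tight (prev r i) (r i) (r i.+1) (phase i).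
Proof. by rewrite /tight /slack subn_eq0 eqn_leq => -> ->. Qed.

Lemma optimal_tight r : optimal r ->
  (forall i, i < h -> tight (prev r i) (r i) (r i.+1) (phase i))
  /\ potential 8 (prev r h) 0 = 24.
Proof.
case=> Hr Hsum; have := admissible_telescope Hr; case: Hr => Hlt Hz Hok.
have := potential_end (prev_lt h Hlt); rewrite Hsum.
set T := \sum_(i < h) _ => Hend E.
have /eqP : T = 0 by lia.
rewrite sum_nat_eq0 => /forallP Hslack; split; last by lia.
move=> i Hi; have Hok_i := Hok i Hi.
have Hstep := potential_step (prev_lt i Hlt) (Hlt i) (Hlt i.+1) (phase_lt i) Hok_i.
rewrite -(slack_eq0 Hok_i Hstep); exact: Hslack (Ordinal Hi).
Qed.

Lemma optimal_states r : optimal r -> forall m, m <= h ->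
  (prev r (h - m), r (h - m), phase (h - m)) \in tight_states (phase m).
Proof.
move=> Hopt; have [Htight Hend] := optimal_tight Hopt.
case: Hopt => -[Hlt Hz _] _; elim=> [|m IH] Hm.
  rewrite subn0 (Hz h (leqnn h)) (phase_3k2 hk) tight_states0.
  exact: mem_end_states (prev_lt h Hlt) Hend.
have Hi : h - m.+1 < h by lia.
have Hs := IH (ltnW Hm); rewrite -(subnSK Hm) in Hs.
apply: (tight_states_step (phase_lt m)).
exact: mem_tight_pred (prev_lt _ Hlt) (phase_lt _) (Htight _ Hi) Hs.
Qed.

Lemma optimal_first_row r : optimal r -> r 0 = 23 \/ r 0 = 29.
Proof.
move=> Hopt; have := optimal_states Hopt (leqnn h).
by rewrite subnn (phase_3k2 hk) => /initial_state_row; apply.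
Qed.

Lemma optimal_next_row r i : optimal r -> i < h ->
  r i.+1 = next_row (prev r i, r i, phase i) (phase (h - i.+1)).
Proof.
move=> Hopt Hi; have [Htight _] := optimal_tight Hopt; case: (Hopt) => -[Hlt _ _] _.
have Hs := optimal_states Hopt (leq_subr i h).
rewrite (subKn (ltnW Hi)) -(subnSK Hi) in Hs.
have Hs' := optimal_states Hopt (leq_subr i.+1 h); rewrite (subKn Hi) in Hs'.
have : r i.+1 \in successors (prev r i, r i, phase i) (tight_states (phase (h - i.+1))).
  by rewrite mem_successors; apply/and3P; split; [exact: Hlt | exact: Htight | exact: Hs'].
by rewrite (successorsE (phase_lt _) Hs) inE => /eqP ->.
Qed.

Lemma optimal_unique r r' : optimal r -> optimal r' -> r 0 = r' 0 -> forall i, r i = r' i.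
Proof.
move=> Hr Hr' E0; suff E i : r i = r' i /\ prev r i = prev r' i by move=> i; case: (E i).
elim: i => [|i [IH IHp]]; first by [].
split; last by [].
have [Hi|Hi] := ltnP i h.
  by rewrite (optimal_next_row Hr Hi) (optimal_next_row Hr' Hi) IH IHp.
case: Hr Hr' => -[_ Hz _] _ [[_ Hz' _] _].
by rewrite (Hz _ (leqW Hi)) (Hz' _ (leqW Hi)).
Qed.

(* The states of an optimal word with top row 29, built by following [next_row]. *)
Fixpoint tight_path i : nat * nat * nat :=
  if i is i'.+1 then
    let s := tight_path i' in (s.1.2, next_row s (phase (h - i)), next_phase s.2)
  else (0, 29, 0).

Lemma tight_path_phase i : (tight_path i).2 = phase i.
Proof. by elim: i => //= i ->. Qed.

Lemma tight_path_mem i : i <= h -> tight_path i \in tight_states (phase (h - i)).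
Proof.
elim: i => [|i IH] Hi; first by rewrite subn0 (phase_3k2 hk); exact: initial_state.
have := IH (ltnW Hi); rewrite -(subnSK Hi) => /(next_rowP (phase_lt _)) [_ Hs].
exact: Hs.
Qed.

Lemma tight_path_tight i : i < h ->
  tight (tight_path i).1.1 (tight_path i).1.2 (tight_path i.+1).1.2 (tight_path i).2.
Proof.
move=> Hi; have := tight_path_mem (ltnW Hi); rewrite -(subnSK Hi).
by move=> /(next_rowP (phase_lt _)) [Ht _]; exact: Ht.
Qed.

Lemma tight_path_end : (tight_path h).1.2 = 0 /\ potential 8 (tight_path h).1.1 0 = 24.
Proof.
have := tight_path_mem (leqnn h); rewrite subnn -[phase 0]/0 tight_states0.
exact: end_statesP.
Qed.

Definition optimal_codes i := if i < h then (tight_path i).1.2 else 0.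

Lemma optimal_codesE i : i <= h -> optimal_codes i = (tight_path i).1.2.
Proof.
rewrite leq_eqVlt => /orP[/eqP ->|Hi]; last by rewrite /optimal_codes Hi.
by rewrite /optimal_codes ltnn tight_path_end.1.
Qed.

Lemma prev_optimal_codes i : i <= h -> prev optimal_codes i = (tight_path i).1.1.
Proof. by case: i => [|i] // Hi; rewrite /= optimal_codesE // ltnW. Qed.

Lemma optimal_codes_lt i : optimal_codes i < 32.
Proof. by rewrite /optimal_codes; case: ifP; case: i => [|i] //= _; apply: next_row_lt. Qed.

Lemma optimal_codes_optimal : optimal optimal_codes.
Proof.
have Htight i : i < h ->
    tight (prev optimal_codes i) (optimal_codes i) (optimal_codes i.+1) (phase i).
  move=> Hi; rewrite prev_optimal_codes ?optimal_codesE ?(ltnW Hi) // -tight_path_phase.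
  exact: tight_path_tight.
have Hadm : admissible optimal_codes.
  split=> [i | i Hi | i /Htight /andP[]//]; first exact: optimal_codes_lt.
  by rewrite /optimal_codes ltnNge Hi.
have slack0 : \sum_(i < h) slack optimal_codes i = 0.
  apply: big1 => i _; have Hi := Htight i (ltn_ord i); case/andP: (Hi) => Hok _.
  have Hstep := potential_step (prev_lt i optimal_codes_lt) (optimal_codes_lt i)
    (optimal_codes_lt i.+1) (phase_lt i) Hok.
  by apply/eqP; rewrite (slack_eq0 Hok Hstep).
split=> //; have := admissible_telescope Hadm.
rewrite slack0 (prev_optimal_codes (leqnn h)) tight_path_end.2.
set S := \sum_(i < h) _; lia.
Qed.

Lemma admissible_code (W : word h 5) : inW2 W -> admissible (code W).
Proof.
move=> /inW2_codes Hok; split=> [i|i|]; [exact: code_lt | exact: code_out | exact: Hok].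
Qed.

Lemma two_full_optimal (W : word h 5) : two_full W -> optimal (code W).
Proof.
case=> HW Hmax; have Hadm := admissible_code HW; split=> //.
apply/eqP; rewrite eqn_leq admissible_sum_le //=.
have [[_ Hz Hok] Hsum] := optimal_codes_optimal.
set V := word_of_codes h optimal_codes.
have codeV i : code V i = optimal_codes i.
  by rewrite code_word_of_codes ?optimal_codes_lt //; case: ltnP => // /Hz.
have prev_codeV i : prev (code V) i = prev optimal_codes i by case: i.
have HV : inW2 V by apply/inW2_codes => i Hi; rewrite prev_codeV !codeV; exact: Hok.
have sumV : \sum_(i < h) popcount (code V i) = 10 * k + 8.
  by rewrite -Hsum; apply: eq_bigr => i _; rewrite codeV.
by have := Hmax V HV; rewrite !nfilled_codes sumV.
Qed.

End Optimum.

Theorem mainTheorem9 (k : nat) (hk : (2 <= k)%N)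
  (W W' : word (3 * k + 2) 5) :
  two_full W -> two_full W' ->
  W' = W \/ W' = reflH W \/ W' = reflV W \/ W' = reflV (reflH W).
Proof.
move=> HW HW'.
have Hr := two_full_optimal hk HW; have Hr' := two_full_optimal hk HW'.
have Hm := two_full_optimal hk (two_full_reflV HW).
have [E|E] : code W' 0 = code W 0 \/ code W' 0 = code (reflV W) 0.
  rewrite code_reflV.
  case: (optimal_first_row hk Hr) => ->; case: (optimal_first_row hk Hr') => ->;
    by [left | right].
- by left; apply: code_inj; apply: optimal_unique Hr' Hr E.
- by right; right; left; apply: code_inj; apply: optimal_unique Hr' Hm E.
Qed.
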